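(* Assume $f$ is in Case 2. Then, for every sufficiently small $r>0$, $A_f^l=A_0\setminus E_z$ holds for every $l>0$ if $\delta\le d$, and for every $0<l<\alpha$ if $\delta>d$ and $(n_1,m_1)\neq(0,\delta)$.
   Context: Let $f(z,w)=(p(z),q(z,w))$ be a holomorphic skew product defined on $\mathbb{C}^2$ or on $\{|z|<R\}\times\mathbb{C}$, where $R$ is so large that the attracting basin $A_p$ of $p$ at $0$ is relatively compact in $\{|z|<R\}$. Assume $p(z)=az^{\delta}+O(z^{\delta+1})$, $a\neq0$, $\delta\ge2$, and $q(z,w)=\sum_{i,j\ge0}b_{ij}z^iw^j$ with $b_{00}=b_{01}=0$. The Newton polygon $N(q)$ is the convex hull of $\bigcup_{b_{ij}\ne0}\{(x,y):x\ge i,\ y\ge j\}$, with vertices $(n_1,m_1),\dots,(n_s,m_s)$, $n_1<\dots<n_s$, $m_1>\dots>m_s$, $s>1$; $T_{s-1}$ is the $y$-intercept of the line through $(n_{s-1},m_{s-1})$ and $(n_s,m_s)$. Case 2 means $\delta\le T_{s-1}$; set $(\gamma,d)=(n_s,m_s)$ and, when $\delta\ne d$, $\alpha=\gamma/(\delta-d)$. For $l>0$ let $U^l=\{|z|<r,\ |w|<r|z|^l\}$ and $A_f^l=\bigcup_{n\ge0}f^{-n}(U^l)$. $A_0$ is the attracting basin of the origin for $f$, and $E_z=\bigcup_{n\ge0}f^{-n}(\{z=0\})$. *)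

From HB Require Import structures.
From mathcomp Require Import all_boot all_order all_algebra.
From mathcomp Require Import complex.
From mathcomp Require Import reals exp.
Set Implicit Arguments.
Unset Strict Implicit.
Unset Printing Implicit Defensive.
Import Order.TTheory GRing.Theory Num.Theory.
Local Open Scope ring_scope.

Section Defs.
Variable R : realType.
Local Notation C := (R[i]).

Definition cabs (z : C) : R := Normc.normc z.

Definition skew (p : C -> C) (q : C -> C -> C) (x : C * C) : C * C :=
  (p x.1, q x.1 x.2).

Definition pseries1 (a : nat -> C) (p : C -> C) (z : C) : Prop :=
  (exists M : R, forall N, \sum_(k < N) cabs (a k) * cabs z ^+ k <= M) /\
  (forall eps : R, 0 < eps -> exists N0, forall N, (N0 <= N)%N ->
     cabs (p z - \sum_(k < N) a k * z ^+ k) < eps).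

Definition pseries2 (b : nat -> nat -> C) (q : C -> C -> C) (z w : C) : Prop :=
  (exists M : R, forall N,
      \sum_(i < N) \sum_(j < N) cabs (b i j) * cabs z ^+ i * cabs w ^+ j <= M) /\
  (forall eps : R, 0 < eps -> exists N0, forall N, (N0 <= N)%N ->
     cabs (q z w - \sum_(i < N) \sum_(j < N) b i j * z ^+ i * w ^+ j) < eps).

Definition basin1 (DZ : C -> Prop) (p : C -> C) : C -> Prop :=
  fun z => (forall k, DZ (iter k p z)) /\
    (forall eps : R, 0 < eps -> exists N, forall k, (N <= k)%N ->
        cabs (iter k p z) < eps).

Definition basin2 (DZ : C -> Prop) (p : C -> C) (q : C -> C -> C) : C * C -> Prop :=
  fun x => (forall k, DZ (iter k (skew p q) x).1) /\
    (forall eps : R, 0 < eps -> exists N, forall k, (N <= k)%N ->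
        cabs (iter k (skew p q) x).1 < eps /\ cabs (iter k (skew p q) x).2 < eps).

(* f^{-n}(U): points whose first n iterates are defined (stay in DZ x C)
   and whose n-th iterate lies in U *)
Definition preim_iter (DZ : C -> Prop) (p : C -> C) (q : C -> C -> C)
    (n : nat) (U : C * C -> Prop) : C * C -> Prop :=
  fun x => (forall k, (k <= n)%N -> DZ (iter k (skew p q) x).1) /\
           U (iter n (skew p q) x).

Definition Ez (DZ : C -> Prop) (p : C -> C) (q : C -> C -> C) : C * C -> Prop :=
  fun x => exists n, preim_iter DZ p q n (fun y => y.1 = 0) x.

Definition Ul (r l : R) : C * C -> Prop :=
  fun x => cabs x.1 < r /\ cabs x.2 < r * powR (cabs x.1) l.

Definition Afl (DZ : C -> Prop) (p : C -> C) (q : C -> C -> C) (r l : R)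
  : C * C -> Prop :=
  fun x => exists n, preim_iter DZ p q n (Ul r l) x.

(* the admissible domains for the z-variable: all of C, or a disc {|z| < Rd}
   in which the basin A_p is relatively compact (its closure, taken in C, is a
   compact subset of the open disc, i.e. A_p lies in a closed disc of radius
   R' < Rd) *)
Definition admissible_domain (DZ : C -> Prop) (p : C -> C) : Prop :=
  (forall z, DZ z) \/
  (exists Rd : R, 0 < Rd /\ (forall z, DZ z <-> cabs z < Rd) /\
     exists R' : R, R' < Rd /\ forall z, basin1 DZ p z -> cabs z <= R').

Definition NPquad (b : nat -> nat -> C) (v : R * R) : Prop :=
  exists i j : nat, b i j != 0 /\ (i%:R <= v.1) /\ (j%:R <= v.2).

Definition conv_hull (S : R * R -> Prop) (v : R * R) : Prop :=
  exists (n : nat) (u : 'I_n -> R * R) (t : 'I_n -> R),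
    (forall k, S (u k)) /\ (forall k, 0 <= t k) /\ \sum_(k < n) t k = 1 /\
    v = (\sum_(k < n) t k * (u k).1, \sum_(k < n) t k * (u k).2).

Definition newton_polygon (b : nat -> nat -> C) : R * R -> Prop :=
  conv_hull (NPquad b).

Definition is_vertex (S : R * R -> Prop) (v : R * R) : Prop :=
  S v /\ forall a c : R * R, forall t : R, S a -> S c -> 0 < t -> t < 1 ->
    v = (t * a.1 + (1 - t) * c.1, t * a.2 + (1 - t) * c.2) -> a = c.

Definition NP_vertices (b : nat -> nat -> C) (s : nat) (nv mv : nat -> nat) : Prop :=
  (forall k, (1 <= k)%N -> (k < s)%N -> (nv k < nv k.+1)%N /\ (mv k.+1 < mv k)%N) /\
  (forall v, is_vertex (newton_polygon b) v <->
     exists k, [/\ (1 <= k)%N, (k <= s)%N & v = ((nv k)%:R, (mv k)%:R)]).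

(* y-intercept of the line through (n_{s-1},m_{s-1}) and (n_s,m_s) *)
Definition T_last (s : nat) (nv mv : nat -> nat) : R :=
  (mv s.-1)%:R + (nv s.-1)%:R * (((mv s.-1)%:R - (mv s)%:R) / ((nv s)%:R - (nv s.-1)%:R)).

End Defs.

(* Write (z_n, w_n) for an orbit of f and Z_n = - ln |z_n|, W_n = - ln |w_n|.
   Near the origin p contracts and |q(z,w)| <= B |z| + C |w|^2 because b_00 = b_01 = 0, so a
   small polydisc is absorbing, and an orbit entering it at a point with z <> 0 never meets
   {z = 0}: this gives A_f^l in A_0 \ E_z.
   Conversely fix lp > l close to l. The minimum of i + lp j over the support of q is attained
   at a vertex of N(q); if delta <= d, or in Case 2 with lp < alpha (then every vertex lies above
   the line through (0, delta) and (gamma, d)), it exceeds delta lp. Hence on the sector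
   |w| >= |z|^lp we get |q(z,w)| <= |w|^mu for some mu > delta, i.e. W_(n+1) >= mu W_n, while
   Z_(n+1) <= dd Z_n for any dd > delta. An orbit in A_0 \ E_z cannot stay in the sector, as
   W_n would outgrow lp Z_n; the first exit from the sector near the origin lies in U^l. *)

From Pilot Require Import Defs.
From HB Require Import structures.
From mathcomp Require Import all_boot all_order all_algebra.
From mathcomp Require Import complex.
From mathcomp Require Import reals exp sequences.
From mathcomp Require Import ring lra.
From Stdlib Require Import Classical_Prop.
Set Implicit Arguments.
Unset Strict Implicit.
Unset Printing Implicit Defensive.
Import Order.TTheory GRing.Theory Num.Theory.
Local Open Scope ring_scope.

(** * Moduli, power series and real estimates *)

Section Modulus.
Variable R : realType.
Local Notation C := (R[i]).
Implicit Types x y z : C.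

Lemma cabs_ge0 z : 0 <= cabs z.
Proof. by case: z => x y; rewrite /cabs /= sqrtr_ge0. Qed.

Lemma cabs0 : cabs (0 : C) = 0.
Proof. exact: Normc.normc0. Qed.

Lemma cabs_eq0 z : cabs z = 0 -> z = 0.
Proof. exact: Normc.eq0_normc. Qed.

Lemma cabs_gt0 z : z != 0 -> 0 < cabs z.
Proof. by move=> nz; rewrite lt_def cabs_ge0 andbT; apply: contra nz => /eqP/cabs_eq0 ->. Qed.

Lemma cabsM x y : cabs (x * y) = cabs x * cabs y.
Proof. exact: Normc.normcM. Qed.

Lemma cabsX z n : cabs (z ^+ n) = cabs z ^+ n.
Proof.
elim: n => [|n IH]; first by rewrite !expr0 /cabs Normc.normc1.
by rewrite !exprS cabsM IH.
Qed.

Lemma cabsD x y : cabs (x + y) <= cabs x + cabs y.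
Proof. exact: le_normcD. Qed.

Lemma cabs_distC x y : cabs (x - y) = cabs (y - x).
Proof. by rewrite /cabs -normcN opprB. Qed.

Lemma cabs_le_addB x y : cabs x <= cabs y + cabs (x - y).
Proof. by have := cabsD y (x - y); rewrite addrC subrK. Qed.

Lemma cabs_real (x : R) : 0 <= x -> cabs (Complex x 0) = x.
Proof. by move=> x0; rewrite /cabs /= expr0n /= addr0 sqrtr_sqr ger0_norm. Qed.

Lemma cabs_sum N (F : nat -> C) :
  cabs (\sum_(k < N) F k) <= \sum_(k < N) cabs (F k).
Proof.
elim: N => [|N IH]; first by rewrite !big_ord0 cabs0.
by rewrite !big_ord_recr /=; apply: le_trans (cabsD _ _) _; apply: lerD.
Qed.

Lemma cabs_limit_le v (S : nat -> C) (B : R) :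
  (forall eps : R, 0 < eps -> exists N0, forall N, (N0 <= N)%N -> cabs (v - S N) < eps) ->
  (forall N, cabs (S N) <= B) -> cabs v <= B.
Proof.
move=> cvS bS; rewrite leNgt; apply/negP => Bv.
have [N0 hN0] := cvS (cabs v - B) ltac:(by rewrite subr_gt0).
have := hN0 N0 (leqnn _); have := bS N0; have := cabs_le_addB v (S N0).
rewrite cabs_distC; lra.
Qed.

Lemma cabs_series1_le (c : nat -> C) z v (d : nat -> R) (E M : R) :
  (forall eps : R, 0 < eps -> exists N0, forall N, (N0 <= N)%N ->
     cabs (v - \sum_(k < N) c k * z ^+ k) < eps) ->
  0 <= E -> (forall k, cabs (c k) * cabs z ^+ k <= E * d k) ->
  (forall N, \sum_(k < N) d k <= M) -> cabs v <= E * M.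
Proof.
move=> cv E0 cd dM.
apply: (cabs_limit_le (S := fun N => \sum_(k < N) c k * z ^+ k) cv) => N.
apply: le_trans (cabs_sum N (fun k => c k * z ^+ k)) _.
apply: le_trans (_ : \sum_(k < N) E * d k <= _); last by rewrite -mulr_sumr ler_wpM2l.
by apply: ler_sum => k _; rewrite cabsM cabsX.
Qed.

Lemma cabs_series2_le (c : nat -> nat -> C) z w v (d : nat -> nat -> R) (E M : R) :
  (forall eps : R, 0 < eps -> exists N0, forall N, (N0 <= N)%N ->
     cabs (v - \sum_(i < N) \sum_(j < N) c i j * z ^+ i * w ^+ j) < eps) ->
  0 <= E -> (forall i j, cabs (c i j) * cabs z ^+ i * cabs w ^+ j <= E * d i j) ->
  (forall N, \sum_(i < N) \sum_(j < N) d i j <= M) -> cabs v <= E * M.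
Proof.
move=> cv E0 cd dM.
apply: (cabs_limit_le (S := fun N => \sum_(i < N) \sum_(j < N) c i j * z ^+ i * w ^+ j) cv).
move=> N.
apply: le_trans (cabs_sum N (fun i => \sum_(j < N) c i j * z ^+ i * w ^+ j)) _.
apply: le_trans (_ : \sum_(i < N) \sum_(j < N) E * d i j <= _); last first.
  by under eq_bigr do rewrite -mulr_sumr; rewrite -mulr_sumr ler_wpM2l.
apply: ler_sum => i _; apply: le_trans (cabs_sum N (fun j => c i j * z ^+ i * w ^+ j)) _.
by apply: ler_sum => j _; rewrite !cabsM !cabsX.
Qed.

End Modulus.

Lemma exists_natr_gt (R : archiRealDomainType) (x : R) : exists n : nat, x < n%:R.
Proof.
exists (Num.bound `|x|); apply: le_lt_trans (real_ler_norm (num_real x)) _.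
exact: archi_boundP (normr_ge0 x).
Qed.

Lemma finite_pos_lower_bound (R : realDomainType) (f : nat -> R) s :
  (forall k, (1 <= k)%N -> (k <= s)%N -> 0 < f k) ->
  exists2 e, 0 < e & forall k, (1 <= k)%N -> (k <= s)%N -> e <= f k.
Proof.
elim: s => [|s IH] f_gt0; first by exists 1 => // k k1 /(leq_trans k1).
have [e e0 e_le] := IH (fun k k1 ks => f_gt0 k k1 (leqW ks)).
have fs0 : 0 < f s.+1 by apply: f_gt0.
exists (Num.min e (f s.+1)); first by rewrite lt_min e0.
move=> k k1; rewrite leq_eqVlt => /orP[/eqP ->|ks]; first by rewrite ge_min lexx orbT.
by rewrite ge_min e_le.
Qed.

Lemma sum_drop_term (V : zmodType) N m (F : nat -> V) : (m < N)%N ->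
  \sum_(k < N) (if k == m :> nat then 0 else F k) = \sum_(k < N) F k - F m.
Proof.
move=> mN; rewrite [in RHS](bigD1 (Ordinal mN)) //= addrAC subrr add0r.
rewrite (bigD1 (Ordinal mN)) //= eqxx add0r; apply: eq_bigr => k /negPf km.
by rewrite -(inj_eq val_inj) /= in km; rewrite km.
Qed.

Lemma exprM_le_add_sqr (R : realDomainType) (u v : R) i j :
  0 <= u <= 1 -> 0 <= v <= 1 -> (0 < i)%N \/ (2 <= j)%N -> u ^+ i * v ^+ j <= u + v ^+ 2.
Proof.
move=> /andP[u0 u1] /andP[v0 v1] ij.
have [ui0 ui1] := (exprn_ge0 i u0, exprn_ile1 i u0 u1).
have [vj0 vj1] := (exprn_ge0 j v0, exprn_ile1 j v0 v1).
have v20 : 0 <= v ^+ 2 := exprn_ge0 2 v0.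
case: ij => [i0|j2].
  have : u ^+ i <= u ^+ 1 by apply: ler_wiXn2l.
  have : u ^+ i * v ^+ j <= u ^+ i by rewrite ler_piMr.
  by rewrite expr1; lra.
have : v ^+ j <= v ^+ 2 by apply: ler_wiXn2l.
have : u ^+ i * v ^+ j <= v ^+ j by rewrite ler_piMl.
lra.
Qed.

Lemma geometric_decay (R : realFieldType) (u v : nat -> R) (B : R) :
  0 <= B -> (forall n, 0 <= u n) -> 0 <= v 0%N ->
  (forall n, u n.+1 <= u n / 4 /\ v n.+1 <= B * u n + v n / 4) ->
  forall n, u n <= u 0%N * 4^-1 ^+ n /\ v n <= (v 0%N + 4 * B * u 0%N) * 2^-1 ^+ n.
Proof.
move=> B0 u_ge0 v0 step; have u0 := u_ge0 0%N.
elim=> [|n [un vn]]; first by rewrite !expr0 !mulr1; split => //; nra.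
have [h0 h1] : 0 <= 2^-1 :> R /\ 2^-1 <= 1 :> R by split; lra.
have [x0 x1] := (exprn_ge0 n h0, exprn_ile1 n h0 h1).
have e4 : 4^-1 ^+ n = 2^-1 ^+ n * 2^-1 ^+ n :> R.
  by rewrite -exprMn -invfM; congr (_^-1 ^+ _); lra.
have [un1 vn1] := step n; rewrite !exprS; rewrite e4 in un *.
have Bun := ler_wpM2l B0 un; have := u_ge0 n.
have Bu0 : B * u 0%N * (2^-1 ^+ n * 2^-1 ^+ n) <= B * u 0%N * 2^-1 ^+ n.
  by apply: ler_wpM2l; [exact: mulr_ge0 | rewrite ler_piMr].
have := mulr_ge0 v0 x0; split; lra.
Qed.

Lemma geometric_lt (R : archiRealFieldType) (c eps : R) : 0 < eps ->
  exists N, c * 2^-1 ^+ N < eps.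
Proof.
move=> eps0; have [N cN] := exists_natr_gt (c / eps).
have pow2 : (N%:R : R) < 2 ^+ N by rewrite -natrX ltr_nat ltn_expl.
exists N; rewrite exprVn ltr_pdivrMr ?exprn_gt0 //; rewrite ltr_pdivrMr // in cN.
by apply: lt_trans cN _; rewrite mulrC ltr_pM2l.
Qed.

Lemma bernoulli_ineq (R : realDomainType) (h : R) n : 0 <= h -> 1 + n%:R * h <= (1 + h) ^+ n.
Proof.
move=> h0; elim: n => [|n IH]; first by rewrite mul0r addr0 expr0.
rewrite exprS -natr1; have := ler_wpM2l (ler_wpDr h0 ler01) IH.
by have := mulr_ge0 (mulr_ge0 (ler0n R n) h0) h0; nra.
Qed.

(* [mu^k W_N] outgrows [lp dd^k Z_N] since [(mu/dd)^k >= 1 + k (mu/dd - 1)]. *)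
Lemma faster_growth_not_dominated (R : archiRealFieldType) (W Z : nat -> R) N (mu dd lp : R) :
  0 < dd -> dd < mu -> 0 < W N -> 0 < lp ->
  (forall n, (N <= n)%N -> mu * W n <= W n.+1 /\ Z n.+1 <= dd * Z n) ->
  ~ (forall n, (N <= n)%N -> W n <= lp * Z n).
Proof.
move=> dd0 dd_mu WN0 lp0 step dominated; have mu0 : 0 <= mu by apply: ltW; apply: lt_trans dd_mu.
have iterated k : mu ^+ k * W N <= W (N + k)%N /\ Z (N + k)%N <= dd ^+ k * Z N.
  elim: k => [|k [IHW IHZ]]; first by rewrite !expr0 !mul1r addn0.
  have [sW sZ] := step (N + k)%N (leq_addr _ _); rewrite addnS !exprS -!mulrA; split.
    exact: le_trans (ler_wpM2l mu0 IHW) sW.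
  exact: le_trans sZ (ler_wpM2l (ltW dd0) IHZ).
pose t := mu / dd; have t1 : 0 < t - 1 by rewrite subr_gt0 ltr_pdivlMr // mul1r.
have [k kbig] := exists_natr_gt (lp * Z N / (W N * (t - 1))).
have [Wk Zk] := iterated k; have := dominated (N + k)%N (leq_addr _ _).
move=> /(le_trans Wk)/le_trans/(_ (ler_wpM2l (ltW lp0) Zk)).
rewrite (_ : mu = dd * t); last by rewrite /t mulrC divfK ?gt_eqF.
rewrite exprMn -mulrA [X in _ <= X]mulrCA ler_pM2l ?exprn_gt0 //.
have := bernoulli_ineq k (ltW t1); rewrite [1 + (t - 1)]addrC subrK => tk.
move/(le_trans (ler_wpM2r (ltW WN0) tk)).
rewrite ltr_pdivrMr ?mulr_gt0 // in kbig.
by have := mulr_ge0 (ltW WN0) (ltW t1); nra.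
Qed.

Lemma neg_ln_ge_near0 (R : realType) (T : R) :
  exists2 rho : R, 0 < rho & forall x, 0 < x -> x <= rho -> T <= - ln x.
Proof.
exists (expR (- T)) => [|x x0 x_rho]; first exact: expR_gt0.
by rewrite lerNr -[- T]expRK ler_ln ?posrE ?expR_gt0.
Qed.

Lemma Ul_of_log_gap (R : realType) (r l lp : R) : 0 < r -> 0 < l -> l < lp ->
  exists2 rho : R, 0 < rho & forall z w : R[i], z != 0 -> cabs z <= rho ->
    (w = 0 \/ lp * - ln (cabs z) < - ln (cabs w)) -> Ul r l (z, w).
Proof.
move=> r0 l0 l_lp; have [rT rT0 bigL] := neg_ln_ge_near0 (`|ln r| / (lp - l)).
exists (Num.min (r / 2) rT) => [|z w z0]; first by rewrite lt_min divr_gt0.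
rewrite le_min => /andP[z_r z_rT] w_small; have z_pos := cabs_gt0 z0.
split; first by apply: le_lt_trans z_r _; rewrite ltr_pdivrMr //; lra.
rewrite /= /powR gt_eqF //; have [->|w0] := eqVneq w 0.
  by rewrite cabs0 mulr_gt0 ?expR_gt0.
case: w_small => [/eqP|w_small]; first by rewrite (negbTE w0).
rewrite -[cabs w]lnK ?posrE ?cabs_gt0 // -[r]lnK ?posrE // -expRD ltr_expR.
have := bigL _ z_pos z_rT; rewrite ler_pdivrMr ?subr_gt0 // mulrC.
have := ler_norm (- ln r); rewrite normrN; nra.
Qed.

(** * Convex hulls and the Newton polygon *)

Section ConvexHull.
Variable R : realType.
Implicit Types (S : R * R -> Prop) (v : R * R).

Lemma conv_hull_mem S v : S v -> conv_hull S v.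
Proof.
move=> Sv; exists 1%N, (fun _ => v), (fun _ => 1); split=> //; split=> //.
by rewrite !big_ord1 !mul1r; split=> //; case: v Sv.
Qed.

Lemma conv_hull_convex S v w (t : R) :
  conv_hull S v -> conv_hull S w -> 0 <= t -> t <= 1 ->
  conv_hull S (t * v.1 + (1 - t) * w.1, t * v.2 + (1 - t) * w.2).
Proof.
move=> [n1 [u1 [t1 [Su1 [t1_ge0 [t1_sum ->]]]]]] [n2 [u2 [t2 [Su2 [t2_ge0 [t2_sum ->]]]]]] t0 t1le.
pose u k := match split k with inl i => u1 i | inr j => u2 j end.
pose tt k := match split k with inl i => t * t1 i | inr j => (1 - t) * t2 j end.
have El (i : 'I_n1) : split (lshift n2 i) = inl i := unsplitK (inl i).
have Er (j : 'I_n2) : split (rshift n1 j) = inr j := unsplitK (inr j).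
exists (n1 + n2)%N, u, tt; split; first by move=> k; rewrite /u; case: (split k).
split; first by move=> k; rewrite /tt; case: (split k) => i; apply: mulr_ge0 => //; lra.
split.
  rewrite big_split_ord /= /tt.
  under [X in X + _]eq_bigr do rewrite El; under [X in _ + X]eq_bigr do rewrite Er.
  by rewrite /= -!mulr_sumr t1_sum t2_sum !mulr1 addrC subrK.
congr (_, _); rewrite big_split_ord /= /tt /u;
  (under [X in _ = X + _]eq_bigr do rewrite El); (under [X in _ = _ + X]eq_bigr do rewrite Er);
  by rewrite /= !mulr_sumr; congr (_ + _); apply: eq_bigr => i _; rewrite mulrA.
Qed.

Lemma conv_hull_shift_up S v (e : R) :
  (forall u, S u -> S (u.1, u.2 + e)) -> conv_hull S v -> conv_hull S (v.1, v.2 + e).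
Proof.
move=> Sup [n [u [t [Su [t_ge0 [t_sum ->]]]]]].
exists n, (fun k => ((u k).1, (u k).2 + e)), t.
split; first by move=> k; apply: Sup.
do 2!split=> //; congr (_, _); under [RHS]eq_bigr do rewrite mulrDr.
by rewrite big_split /= -mulr_suml t_sum mul1r.
Qed.

Lemma conv_hull_supporting_line S (al be m x0 : R) v :
  (forall u, S u -> m <= al * u.1 + be * u.2) ->
  (forall u, S u -> al * u.1 + be * u.2 = m -> x0 <= u.1) ->
  conv_hull S v -> m <= al * v.1 + be * v.2 /\ (al * v.1 + be * v.2 = m -> x0 <= v.1).
Proof.
move=> Sm Sx [n [u [t [Su [t_ge0 [t_sum ->]]]]]] /=.
pose ex k := al * (u k).1 + be * (u k).2 - m.
have excess : al * (\sum_(k < n) t k * (u k).1) + be * (\sum_(k < n) t k * (u k).2) - m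
              = \sum_(k < n) t k * ex k.
  rewrite /ex; under [RHS]eq_bigr do
    rewrite mulrBr mulrDr !mulrA [t _ * al]mulrC [t _ * be]mulrC -!mulrA.
  by rewrite sumrB big_split /= -!mulr_sumr -mulr_suml t_sum mul1r.
have ex_ge0 k : 0 <= t k * ex k by rewrite mulr_ge0 // subr_ge0 Sm.
split; first by rewrite -subr_ge0 excess sumr_ge0.
move=> on_line; have ex_sum0 : \sum_(k < n) t k * ex k = 0 by rewrite -excess on_line subrr.
have ex0 := psumr_eq0P (fun k _ => ex_ge0 k) ex_sum0.
rewrite -[x0]mul1r -t_sum mulr_suml; apply: ler_sum => k _.
have [->|tk0] := eqVneq (t k) 0; first by rewrite !mul0r.
rewrite ler_wpM2l // Sx //; apply/eqP; rewrite -subr_eq0.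
by have /eqP := ex0 k isT; rewrite mulf_eq0 (negbTE tk0).
Qed.

Lemma vertex_lowest S (x y y' : R) :
  (forall u e, 0 <= e -> S u -> S (u.1, u.2 + e)) ->
  is_vertex (conv_hull S) (x, y) -> conv_hull S (x, y') -> y <= y'.
Proof.
move=> Sup [_ vext] Hy'; rewrite leNgt; apply/negP => y'y.
have e_ge0 : 0 <= 2 * (y - y') by lra.
have Hup := conv_hull_shift_up (fun u => Sup u _ e_ge0) Hy'.
have [] := vext _ _ 2^-1 Hup Hy' ltac:(lra) ltac:(lra) ltac:(congr (_, _) => /=; lra).
lra.
Qed.

End ConvexHull.

(* On the curve [|w| = |z|^lp] the monomial [z^i w^j] has modulus [|z|^(np_weight lp i j)]. *)
Definition np_weight (R : pzSemiRingType) (lp : R) (i j : nat) : R := i%:R + lp * j%:R.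

Lemma log_weight_ge (R : realDomainType) (lp kap Z W : R) (i j : nat) :
  0 < lp -> 0 <= W -> W <= lp * Z -> kap * lp <= np_weight lp i j ->
  kap * W <= i%:R * Z + j%:R * W.
Proof.
move=> lp0 W0 WZ weight; rewrite -(ler_pM2l lp0).
have := ler_wpM2r W0 weight; have := ler_wpM2l (ler0n R i) WZ; rewrite /np_weight; nra.
Qed.

Section NewtonPolygon.
Variable R : realType.
Variable b : nat -> nat -> R[i].

Lemma NPquad_shift_up u (e : R) : 0 <= e -> NPquad b u -> NPquad b (u.1, u.2 + e).
Proof.
move=> e0 [i [j [bij [iu ju]]]]; exists i, j; do 2!split=> //=.
by apply: le_trans ju _; rewrite lerDl.
Qed.

Lemma support_weight_lexmin (lp : R) i0 j0 : 0 < lp -> b i0 j0 != 0 ->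
  exists i1 j1, [/\ b i1 j1 != 0,
    forall i j, b i j != 0 -> np_weight lp i1 j1 <= np_weight lp i j &
    forall i j, b i j != 0 -> np_weight lp i j = np_weight lp i1 j1 -> (i1 <= i)%N].
Proof.
move=> lp0 bij0; pose L0 := np_weight lp i0 j0.
have [Bn Bn_gt] := exists_natr_gt (L0 + L0 / lp).
have bounded i j : np_weight lp i j <= L0 -> (i < Bn)%N /\ (j < Bn)%N.
  rewrite /np_weight => hL; have i_ge0 : (0 : R) <= i%:R := ler0n _ _.
  have lpj0 : 0 <= lp * j%:R by apply: mulr_ge0; [exact: ltW | exact: ler0n].
  have hj : (j%:R : R) <= L0 / lp by rewrite ler_pdivlMr // mulrC; lra.
  have L0_ge0 : 0 <= L0 by lra.
  have : 0 <= L0 / lp by apply: divr_ge0 => //; exact: ltW.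
  by split; rewrite -(ltr_nat R); lra.
have [Bi0 Bj0] := bounded i0 j0 (lexx _).
pose P := [pred w : 'I_Bn * 'I_Bn | (b w.1 w.2 != 0) && (np_weight lp w.1 w.2 <= L0)].
have P0 : P (Ordinal Bi0, Ordinal Bj0) by rewrite /P /= bij0 lexx.
case: (arg_minP (fun w : 'I_Bn * 'I_Bn => np_weight lp w.1 w.2) P0) => w1 /andP[bw1 Lw1] w1_min.
pose P' := [pred w | P w && (np_weight lp w.1 w.2 == np_weight lp w1.1 w1.2)].
have P'w1 : P' w1 by rewrite /P' /P /= bw1 Lw1 eqxx.
case: (arg_minP (fun w : 'I_Bn * 'I_Bn => (w.1 : nat)) P'w1).
move=> w2 /andP[/andP[bw2 _] /eqP Lw2] w2_min.
have weight_min i j : b i j != 0 -> np_weight lp w1.1 w1.2 <= np_weight lp i j.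
  move=> bij; have [Lij|] := leP (np_weight lp i j) L0; last by move/ltW; apply: le_trans.
  have [Bi Bj] := bounded i j Lij.
  by apply: (w1_min (Ordinal Bi, Ordinal Bj)); rewrite /P /= bij Lij.
exists w2.1, w2.2; split; rewrite ?Lw2 //.
move=> i j bij Lij; have [Bi Bj] := bounded i j ltac:(by rewrite Lij Lw1).
by apply: (w2_min (Ordinal Bi, Ordinal Bj)); rewrite /P' /P /= bij Lij Lw1 eqxx.
Qed.

Lemma support_lexmin_vertex (lp : R) i1 j1 : 0 < lp -> b i1 j1 != 0 ->
  (forall i j, b i j != 0 -> np_weight lp i1 j1 <= np_weight lp i j) ->
  (forall i j, b i j != 0 -> np_weight lp i j = np_weight lp i1 j1 -> (i1 <= i)%N) ->
  is_vertex (newton_polygon b) (i1%:R, j1%:R).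
Proof.
move=> lp0 bij1 wmin wtie; pose m := np_weight lp i1 j1.
have quad_above u : NPquad b u ->
    m <= 1 * u.1 + lp * u.2 /\ (1 * u.1 + lp * u.2 = m -> i1%:R <= u.1).
  case=> i [j [bij [iu ju]]]; have := wmin i j bij; rewrite /m /np_weight mul1r.
  have : lp * j%:R <= lp * u.2 by rewrite ler_pM2l.
  move=> lpj wij; split; first lra.
  move=> on_line.
  have -> : u.1 = i%:R by lra.
  by rewrite ler_nat; apply: (wtie i j) => //; rewrite /np_weight; lra.
have hull_above u := conv_hull_supporting_line (fun u Su => (quad_above u Su).1)
                                               (fun u Su => (quad_above u Su).2) (v := u).
split; first by apply: conv_hull_mem; exists i1, j1.
case=> x y [x' y'] t /hull_above[/= xy_above xy_x] /hull_above[/= xy'_above xy'_x] t0 t1 [ex ey].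
rewrite /m /np_weight !mul1r in xy_above xy_x xy'_above xy'_x.
have on_line : x + lp * y = i1%:R + lp * j1%:R /\ x' + lp * y' = i1%:R + lp * j1%:R.
  rewrite ex ey in xy_above xy'_above *; split; nra.
have xi1 := xy_x on_line.1; have x'i1 := xy'_x on_line.2.
have [xe x'e] : x = i1%:R /\ x' = i1%:R by split; nra.
rewrite xe x'e in on_line *; congr (_, _); apply: (mulfI (lt0r_neq0 lp0)); lra.
Qed.

Lemma vertex_weight_le s nv mv (lp : R) i0 j0 : NP_vertices b s nv mv -> 0 < lp ->
  b i0 j0 != 0 -> exists k, [/\ (1 <= k)%N, (k <= s)%N &
     np_weight lp (nv k) (mv k) <= np_weight lp i0 j0].
Proof.
move=> [_ vertices] lp0 bij0.
have [i1 [j1 [bij1 wmin wtie]]] := support_weight_lexmin lp0 bij0.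
have [k [k1 ks [ni mj]]] := (vertices _).1 (support_lexmin_vertex lp0 bij1 wmin wtie).
exists k; split=> //; move/eqP: ni; rewrite eqr_nat => /eqP <-.
by move/eqP: mj; rewrite eqr_nat => /eqP <-; apply: wmin.
Qed.

Section Vertices.
Variables (s : nat) (nv mv : nat -> nat).
Hypothesis vertices : NP_vertices b s nv mv.

Lemma NP_vertices_lt k k' : (1 <= k)%N -> (k < k')%N -> (k' <= s)%N ->
  (nv k < nv k')%N /\ (mv k' < mv k)%N.
Proof.
have [step _] := vertices; move=> k1; elim: k' => // k' IH.
rewrite ltnS leq_eqVlt => /orP[/eqP <- ks|kk' k's]; first exact: step.
have [nk mk] := IH kk' (ltnW k's); have [nk' mk'] := step k' (leq_trans k1 (ltnW kk')) k's.
by split; [apply: ltn_trans nk' | apply: ltn_trans mk].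
Qed.

Lemma NP_vertices_le k k' : (1 <= k)%N -> (k <= k')%N -> (k' <= s)%N ->
  (nv k <= nv k')%N /\ (mv k' <= mv k)%N.
Proof.
move=> k1; rewrite leq_eqVlt => /orP[/eqP -> //|kk' k's].
by have [/ltnW ? /ltnW ?] := NP_vertices_lt k1 kk' k's.
Qed.

Lemma NP_vertex_is_vertex k : (1 <= k)%N -> (k <= s)%N ->
  is_vertex (newton_polygon b) ((nv k)%:R, (mv k)%:R).
Proof. by move=> k1 ks; apply/vertices.2; exists k. Qed.

Lemma NP_vertex_nv0 k : (1 <= k)%N -> (k <= s)%N -> nv k = 0%N -> k = 1%N.
Proof.
move=> k1 ks nk0; apply/eqP; rewrite eqn_leq k1 andbT leqNgt; apply/negP => k_gt1.
by have [] := NP_vertices_lt (leqnn 1) k_gt1 ks; rewrite nk0.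
Qed.

Hypothesis s_gt1 : (1 < s)%N.

(* The point of the segment [vertex k, vertex s] with abscissa [n_(s-1)] lies in N(q),
   hence not below vertex [s-1]. *)
Lemma NP_vertex_above_last_edge k : (1 <= k)%N -> (k <= s)%N ->
  0 <= ((nv k)%:R - (nv s)%:R) * ((mv s.-1)%:R - (mv s)%:R)
       + ((mv k)%:R - (mv s)%:R) * ((nv s)%:R - (nv s.-1)%:R) :> R.
Proof.
move=> k1; rewrite leq_eqVlt => /orP[/eqP ->|]; first by rewrite !subrr !mul0r addr0.
rewrite -{1}(prednK (ltnW s_gt1)) ltnS => k_le.
have s1 : (1 <= s.-1)%N by rewrite -ltnS prednK // ltnW.
have s1s : (s.-1 < s)%N by rewrite prednK ?ltnS // ltnW.
have [nk1 _] := NP_vertices_le k1 k_le (ltnW s1s).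
have [ns1 _] := NP_vertices_lt s1 s1s (leqnn s).
set xk : R := (nv k)%:R; set yk : R := (mv k)%:R; set g : R := (nv s)%:R.
set d : R := (mv s)%:R; set x1 : R := (nv s.-1)%:R; set y1 : R := (mv s.-1)%:R.
have xkx1 : xk <= x1 by rewrite ler_nat.
have x1g : x1 < g by rewrite ltr_nat.
pose t := (g - x1) / (g - xk).
have t0 : 0 <= t by rewrite divr_ge0 //; lra.
have t1 : t <= 1 by rewrite ler_pdivrMr; lra.
have := conv_hull_convex (NP_vertex_is_vertex k1 (leq_trans k_le (ltnW s1s))).1
                         (NP_vertex_is_vertex (ltnW s_gt1) (leqnn s)).1 t0 t1.
rewrite /= -/xk -/yk -/g -/d (_ : t * xk + (1 - t) * g = x1); last by rewrite /t; field; lra.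
move/(vertex_lowest (fun u e e0 => @NPquad_shift_up u e e0) (NP_vertex_is_vertex s1 (ltnW s1s))).
rewrite -/y1 => y1_le.
have tg : t * (g - xk) = g - x1 by rewrite /t divfK //; lra.
have gxk : 0 <= g - xk by lra.
nra.
Qed.

Lemma weighted_order_gap (D lp : R) : 0 < lp ->
  (forall k, (1 <= k)%N -> (k <= s)%N -> D * lp < np_weight lp (nv k) (mv k)) ->
  exists2 e, 0 < e & forall i j, b i j != 0 -> D * lp + e <= np_weight lp i j.
Proof.
move=> lp0 above.
have [e e0 e_le] := @finite_pos_lower_bound _ (fun k => np_weight lp (nv k) (mv k) - D * lp) s
  (fun k k1 ks => ltac:(by rewrite subr_gt0 above)).
exists e => // i j bij; have [k [k1 ks wk]] := vertex_weight_le vertices lp0 bij.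
by have := e_le k k1 ks; lra.
Qed.

Lemma vertex_weight_gt_of_le_last (D : nat) (lp : R) : (D <= mv s)%N -> 0 < lp ->
  forall k, (1 <= k)%N -> (k <= s)%N -> D%:R * lp < np_weight lp (nv k) (mv k).
Proof.
move=> Ds lp0 k k1 ks; have [_ mk] := NP_vertices_le k1 ks (leqnn s).
have Dk : (D%:R : R) <= (mv k)%:R by rewrite ler_nat (leq_trans Ds mk).
rewrite /np_weight; have [nk0|nk_gt0] := posnP (nv k).
  have k_eq1 := NP_vertex_nv0 k1 ks nk0; rewrite nk0 k_eq1 add0r mulrC ltr_pM2l //.
  have [_ m1s] := NP_vertices_lt (leqnn 1) s_gt1 (leqnn s).
  by rewrite ltr_nat (leq_ltn_trans Ds m1s).
have : (0 : R) < (nv k)%:R by rewrite ltr0n.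
have : D%:R * lp <= lp * (mv k)%:R by rewrite mulrC ler_pM2l.
lra.
Qed.

(* Case 2 puts the line through (0, D) and the last vertex below the last edge. *)
Lemma NP_vertex_above_delta_line (D : nat) k : D%:R <= T_last R s nv mv ->
  (1 <= k)%N -> (k <= s)%N ->
  ((nv s)%:R - (nv k)%:R) * (D%:R - (mv s)%:R) <= (nv s)%:R * ((mv k)%:R - (mv s)%:R) :> R.
Proof.
move=> DT k1 ks; have s1 : (1 <= s.-1)%N by rewrite -ltnS prednK // ltnW.
have s1s : (s.-1 < s)%N by rewrite prednK ?ltnS // ltnW.
have [ns1 _] := NP_vertices_lt s1 s1s (leqnn s).
have [nks _] := NP_vertices_le k1 ks (leqnn s).
have above := NP_vertex_above_last_edge k1 ks.
move: DT above; rewrite /T_last.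
set xk : R := (nv k)%:R; set yk : R := (mv k)%:R; set g : R := (nv s)%:R.
set d : R := (mv s)%:R; set x1 : R := (nv s.-1)%:R; set y1 : R := (mv s.-1)%:R.
set DD : R := D%:R => DT above.
have x1g : 0 < g - x1 by rewrite subr_gt0 ltr_nat.
have xkg : 0 <= g - xk by rewrite subr_ge0 ler_nat.
have g0 : 0 <= g := ler0n _ _.
have T_edge : (DD - d) * (g - x1) <= g * (y1 - d).
  have slope : (y1 - d) / (g - x1) * (g - x1) = y1 - d by rewrite divfK // lt0r_neq0.
  have := ler_wpM2r (ltW x1g) DT; nra.
rewrite -(ler_pM2r x1g) -mulrA.
apply: le_trans (_ : (g - xk) * (g * (y1 - d)) <= _); first exact: ler_wpM2l.
by rewrite mulrCA -mulrA ler_wpM2l //; lra.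
Qed.

Lemma vertex_weight_gt_of_case2 (D : nat) (lp : R) :
  D%:R <= T_last R s nv mv -> (mv s < D)%N -> (nv 1%N, mv 1%N) <> (0%N, D) ->
  0 < lp -> lp < (nv s)%:R / (D%:R - (mv s)%:R) ->
  forall k, (1 <= k)%N -> (k <= s)%N -> D%:R * lp < np_weight lp (nv k) (mv k).
Proof.
move=> DT sD not_first lp0 lp_lt k k1 ks.
have key := NP_vertex_above_delta_line DT k1 ks.
move: lp_lt key; rewrite /np_weight.
set xk : R := (nv k)%:R; set yk : R := (mv k)%:R; set g : R := (nv s)%:R.
set d : R := (mv s)%:R; set DD : R := D%:R => lp_lt key.
have dD : 0 < DD - d by rewrite subr_gt0 ltr_nat.
have g0 : 0 < g.
  by rewrite ltr0n (leq_ltn_trans (leq0n _) (NP_vertices_lt (leqnn 1) s_gt1 (leqnn s)).1).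
have lp_edge : lp * (DD - d) < g by rewrite -ltr_pdivlMr.
have [xk_eq0|xk_gt0] := eqVneq xk 0.
  have nk0 : nv k = 0%N by apply/eqP; rewrite -(eqr_nat R) -/xk xk_eq0.
  have DDyk : DD <= yk by rewrite xk_eq0 subr0 in key; nra.
  have : DD != yk.
    apply/eqP => /eqP; rewrite eqr_nat => /eqP Dk; apply: not_first.
    by rewrite -(NP_vertex_nv0 k1 ks nk0) Dk nk0.
  by rewrite xk_eq0 add0r mulrC ltr_pM2l // lt_neqAle => ->.
have : 0 < xk * (g - lp * (DD - d)) by rewrite mulr_gt0 ?subr_gt0 // lt_def xk_gt0 ler0n.
have : lp * ((g - xk) * (DD - d)) <= lp * (g * (yk - d)) by rewrite ler_pM2l.
nra.
Qed.

End Vertices.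

End NewtonPolygon.

(** * Dynamics near the origin *)

Section Dynamics.
Variable R : realType.
Local Notation C := (R[i]).
Variables (DZ : C -> Prop) (p : C -> C) (q : C -> C -> C) (ca : nat -> C) (a : C)
  (dl : nat) (b : nat -> nat -> C).
Hypothesis DZ_ball : exists2 rD : R, 0 < rD & forall z, cabs z <= rD -> DZ z.
Hypothesis p_series : forall z, DZ z -> pseries1 ca p z.
Hypothesis ca_lt : forall k, (k < dl)%N -> ca k = 0.
Hypothesis ca_dl : ca dl = a.
Hypothesis q_series : forall z w, DZ z -> pseries2 b q z w.
Hypothesis a_neq0 : a != 0.
Hypothesis dl_ge2 : (2 <= dl)%N.
Hypothesis b00 : b 0%N 0%N = 0.
Hypothesis b01 : b 0%N 1%N = 0.

(* Qualified: plain [skew] is MathComp's sesquilinear notation. *)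
Local Notation f := (Defs.skew p q).

Lemma p_monomial_approx : exists rho K : R, [/\ 0 < rho, 0 < K &
  forall z, cabs z <= rho -> DZ z /\ cabs (p z - a * z ^+ dl) <= K * cabs z ^+ dl.+1].
Proof.
have [rD rD0 ballD] := DZ_ball.
have D1 : DZ (Complex rD 0) by apply: ballD; rewrite cabs_real // ltW.
have [[M1 M1_bound] _] := p_series D1; rewrite cabs_real in M1_bound; last exact: ltW.
have M1_ge0 : 0 <= M1 by have := M1_bound 0%N; rewrite big_ord0.
have rD_dl0 : 0 < rD ^+ dl.+1 := exprn_gt0 _ rD0.
have M1r : 0 <= M1 / rD ^+ dl.+1 by rewrite divr_ge0 // ltW.
exists rD, (M1 / rD ^+ dl.+1 + 1); split => [//||z zD]; first lra.
split; first exact: ballD.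
pose u := cabs z / rD.
have u0 : 0 <= u by rewrite divr_ge0 ?cabs_ge0 // ltW.
have u1 : u <= 1 by rewrite ler_pdivrMr ?mul1r.
apply: le_trans (_ : u ^+ dl.+1 * M1 <= _); last first.
  rewrite /u expr_div_n (_ : _ / _ * M1 = M1 / rD ^+ dl.+1 * cabs z ^+ dl.+1); last by ring.
  by apply: ler_wpM2r; [rewrite exprn_ge0 ?cabs_ge0 | rewrite lerDl].
apply: (@cabs_series1_le _ (fun k => if k == dl then 0 else ca k) z _
                          (fun k => cabs (ca k) * rD ^+ k)) => //.
- move=> eps eps0; have [_ /(_ eps eps0)[N0 hN0]] := p_series (ballD z zD).
  exists (maxn N0 dl.+1) => N; rewrite geq_max => /andP[N0N dlN].
  under eq_bigr do rewrite (fun_if (fun c => c * z ^+ _)) mul0r.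
  by rewrite (sum_drop_term (fun k => ca k * z ^+ k)) // ca_dl opprB addrA subrK; apply: hN0.
- exact: exprn_ge0.
- move=> k; case: eqP => [_|/eqP kdl].
    by rewrite cabs0 mul0r mulr_ge0 ?exprn_ge0 // mulr_ge0 ?cabs_ge0 // exprn_ge0 // ltW.
  have [/ca_lt ->|dlk] := ltnP k dl; first by rewrite cabs0 !mul0r mulr0.
  have dlk1 : (dl.+1 <= k)%N by rewrite ltn_neqAle eq_sym kdl.
  rewrite mulrCA; apply: ler_wpM2l; first exact: cabs_ge0.
  rewrite (_ : cabs z = u * rD); last by rewrite divfK ?gt_eqF.
  rewrite exprMn; apply: ler_wpM2r; [exact: exprn_ge0 (ltW rD0) | exact: ler_wiXn2l].
Qed.

Lemma q_coefficient_bound : exists rho M : R, [/\ 0 < rho, 0 < M &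
  forall z w (E : R), cabs z <= rho -> 0 <= E ->
    (forall i j, b i j != 0 -> cabs z ^+ i * cabs w ^+ j <= E * (rho ^+ i * rho ^+ j)) ->
    cabs (q z w) <= E * M].
Proof.
have [rD rD0 ballD] := DZ_ball.
have D1 : DZ (Complex rD 0) by apply: ballD; rewrite cabs_real // ltW.
have [[M M_bound] _] := q_series (Complex rD 0) D1.
rewrite cabs_real in M_bound; last exact: ltW.
have M_ge0 : 0 <= M by have := M_bound 0%N; rewrite big_ord0.
exists rD, (M + 1); split => [//|//|z w E zD E0 mono_le]; first lra.
apply: le_trans (_ : E * M <= _); last by rewrite ler_wpM2l //; lra.
apply: (@cabs_series2_le _ b z w _ (fun i j => cabs (b i j) * rD ^+ i * rD ^+ j)) => //.
  by have [_] := q_series w (ballD z zD).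
move=> i j; have [->|bij] := eqVneq (b i j) 0; first by rewrite cabs0 !mul0r mulr0.
by rewrite -!mulrA (mulrCA E); apply: ler_wpM2l; [exact: cabs_ge0 | exact: mono_le].
Qed.

Lemma p_modulus_bounds : exists2 eta : R, 0 < eta & forall z, cabs z <= eta ->
  [/\ DZ z, cabs a / 2 * cabs z ^+ dl <= cabs (p z) & cabs (p z) <= 3 * cabs a / 2 * cabs z ^+ dl].
Proof.
have [rho [K [rho0 K0 approx]]] := p_monomial_approx.
have a0 : 0 < cabs a := cabs_gt0 a_neq0.
exists (Num.min rho (cabs a / (2 * K))) => [|z]; first by rewrite lt_min rho0 divr_gt0 ?mulr_gt0.
rewrite le_min => /andP[z_rho z_small].
have [Dz approx_z] := approx z z_rho.
have err : cabs (p z - a * z ^+ dl) <= cabs a / 2 * cabs z ^+ dl.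
  apply: le_trans approx_z _; rewrite exprS mulrA.
  apply: ler_wpM2r; first by rewrite exprn_ge0 ?cabs_ge0.
  have := ler_wpM2l (ltW K0) z_small.
  by rewrite (_ : K * (cabs a / (2 * K)) = cabs a / 2) //; field; rewrite gt_eqF.
have := cabs_le_addB (p z) (a * z ^+ dl); have := cabs_le_addB (a * z ^+ dl) (p z).
by rewrite cabs_distC cabsM cabsX; split => //; lra.
Qed.

Lemma q_quadratic_bound : exists rho B Cq : R, [/\ 0 < rho, 0 < B, 0 < Cq &
  forall z w, cabs z <= rho -> cabs w <= rho -> cabs (q z w) <= B * cabs z + Cq * cabs w ^+ 2].
Proof.
have [rho [M [rho0 M0 q_le]]] := q_coefficient_bound.
exists rho, (M / rho), (M / rho ^+ 2); split; rewrite ?divr_gt0 ?exprn_gt0 // => z w z_rho w_rho.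
pose u := cabs z / rho; pose v := cabs w / rho.
have unit_int x : x <= rho -> 0 <= x -> 0 <= x / rho <= 1.
  by move=> x_rho x0; rewrite divr_ge0 ?ler_pdivrMr ?mul1r // ltW.
have u01 := unit_int _ z_rho (cabs_ge0 z); have v01 := unit_int _ w_rho (cabs_ge0 w).
rewrite (_ : _ + _ = (u + v ^+ 2) * M); last by rewrite /u /v; field; rewrite gt_eqF.
apply: q_le => // [|i j bij].
  by case/andP: u01 => ? _; case/andP: v01 => ? _; rewrite addr_ge0 ?exprn_ge0.
have scale x n : cabs x ^+ n = (cabs x / rho) ^+ n * rho ^+ n by rewrite -exprMn divfK ?gt_eqF.
rewrite scale (scale w) mulrACA; apply: ler_wpM2r; first by rewrite mulr_ge0 ?exprn_ge0 ?ltW.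
apply: exprM_le_add_sqr => //; case: i bij => [|i] bij; last by left.
by right; case: j bij => [|[|j]] //; rewrite ?b00 ?b01 eqxx.
Qed.

Lemma absorbing_polydisc : exists eta sig B : R, [/\ 0 < eta, eta <= sig, eta <= 1, 0 <= B &
  forall z w, cabs z <= eta -> cabs w <= sig ->
    [/\ DZ z, cabs (p z) <= cabs z / 4, cabs (q z w) <= B * cabs z + cabs w / 4,
        cabs (q z w) <= sig & (z != 0 -> p z != 0)]].
Proof.
have [etap etap0 p_bounds] := p_modulus_bounds.
have [rho [B [Cq [rho0 B0 Cq0 q_le]]]] := q_quadratic_bound.
have a0 : 0 < cabs a := cabs_gt0 a_neq0.
have [sig sig0 [sig_rho sig_C]] : exists2 sig : R, 0 < sig & sig <= rho /\ sig * (4 * Cq) <= 1.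
  exists (Num.min rho (1 / (4 * Cq))); first by rewrite lt_min rho0 divr_gt0 ?mulr_gt0.
  by split; rewrite ?ge_min ?lexx // -ler_pdivlMr ?mulr_gt0 // ge_min lexx orbT.
have [eta eta0 [eta_p eta_a eta_B eta_sig eta_1]] : exists2 eta : R, 0 < eta &
    [/\ eta <= etap, eta * (6 * cabs a) <= 1, eta * (2 * B) <= sig, eta <= sig & eta <= 1].
  exists (Num.min (Num.min etap (1 / (6 * cabs a))) (Num.min (sig / (2 * B)) (Num.min sig 1))).
    by rewrite !lt_min etap0 sig0 ltr01 !divr_gt0 ?mulr_gt0.
  by split; rewrite -?ler_pdivlMr ?mulr_gt0 // !ge_min !lexx ?orbT.
exists eta, sig, B; split => //; first exact: ltW.
move=> z w z_eta w_sig; have [z0 w0] := (cabs_ge0 z, cabs_ge0 w).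
have [Dz p_lo p_hi] := p_bounds z (le_trans z_eta eta_p).
have z_sqr : cabs z ^+ dl <= cabs z ^+ 2 by apply: ler_wiXn2l => //; lra.
have za : cabs z * (6 * cabs a) <= 1 by nra.
have zB : cabs z * (2 * B) <= sig by nra.
have wC : cabs w * (4 * Cq) <= 1 by nra.
have q_bound := q_le z w (le_trans z_eta (le_trans eta_sig sig_rho)) (le_trans w_sig sig_rho).
have q_le4 : cabs (q z w) <= B * cabs z + cabs w / 4.
  apply: le_trans q_bound _; rewrite lerD2l; nra.
split => //.
- apply: le_trans p_hi _; rewrite expr2 in z_sqr; nra.
- lra.
move=> z_neq0; apply/eqP => pz0; move: p_lo; rewrite pz0 cabs0.
have : 0 < cabs a / 2 * cabs z ^+ dl by rewrite mulr_gt0 ?exprn_gt0 ?cabs_gt0 ?divr_gt0.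
lra.
Qed.

Section PolydiscOrbits.
Variables (eta sig B : R).
Hypothesis eta0 : 0 < eta.
Hypothesis eta_sig : eta <= sig.
Hypothesis eta_1 : eta <= 1.
Hypothesis B0 : 0 <= B.
Hypothesis absorbing : forall z w, cabs z <= eta -> cabs w <= sig ->
  [/\ DZ z, cabs (p z) <= cabs z / 4, cabs (q z w) <= B * cabs z + cabs w / 4,
      cabs (q z w) <= sig & (z != 0 -> p z != 0)].

Local Notation in_polydisc y := (cabs y.1 <= eta /\ cabs y.2 <= sig).

Lemma iter_skew_fst n (y : C * C) : (iter n f y).1 = iter n p y.1.
Proof. by elim: n => //= n ->. Qed.

Lemma polydisc_iter (y : C * C) : in_polydisc y -> forall n, in_polydisc (iter n f y).
Proof.
move=> y_in; elim=> //= n [zn wn]; have [_ pz _ qz _] := absorbing zn wn.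
by split => //; apply: le_trans pz _; have := cabs_ge0 (iter n f y).1; lra.
Qed.

Lemma polydisc_iter_decay (y : C * C) : in_polydisc y -> forall n,
  cabs (iter n f y).1 <= eta * 4^-1 ^+ n /\ cabs (iter n f y).2 <= (sig + 4 * B * eta) * 2^-1 ^+ n.
Proof.
move=> y_in n.
have step m : cabs (iter m.+1 f y).1 <= cabs (iter m f y).1 / 4 /\
    cabs (iter m.+1 f y).2 <= B * cabs (iter m f y).1 + cabs (iter m f y).2 / 4.
  by have [zm wm] := polydisc_iter y_in m; have [_ pz qz _ _] := absorbing zm wm.
have [un vn] := geometric_decay (u := fun m => cabs (iter m f y).1)
  (v := fun m => cabs (iter m f y).2) B0 (fun m => cabs_ge0 _) (cabs_ge0 _) step n.
have x0 : 0 <= 2^-1 ^+ n :> R by apply: exprn_ge0; rewrite invr_ge0.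
have x0' : 0 <= 4^-1 ^+ n :> R by apply: exprn_ge0; rewrite invr_ge0.
have [y1 y2] := y_in; have := ler_wpM2l B0 y1.
split; [apply: le_trans un _ | apply: le_trans vn _]; apply: ler_wpM2r => //; lra.
Qed.

Lemma polydisc_iter_cvg (y : C * C) : in_polydisc y -> forall eps : R, 0 < eps ->
  exists N, forall k, (N <= k)%N -> cabs (iter k f y).1 < eps /\ cabs (iter k f y).2 < eps.
Proof.
move=> y_in eps eps0; have [N small] := geometric_lt (sig + 4 * B * eta + eta) eps0.
exists N => k Nk; have [zk wk] := polydisc_iter_decay y_in k.
have [h0 h1] : 0 <= 2^-1 :> R /\ 2^-1 <= 1 :> R by split; lra.
have k_N : 2^-1 ^+ k <= 2^-1 ^+ N :> R by apply: ler_wiXn2l.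
have k_4 : 4^-1 ^+ k <= 2^-1 ^+ k :> R by apply: lerXn2r; rewrite ?nnegrE ?invr_ge0 //; lra.
have [xk0 xN0] := (exprn_ge0 k h0, exprn_ge0 N h0).
have K0 : 0 <= sig + 4 * B * eta.
  by have := mulr_ge0 B0 (ltW eta0); have := eta0; have := eta_sig; lra.
have := ler_wpM2l (ltW eta0) (le_trans k_4 k_N); have := ler_wpM2l K0 k_N.
have := mulr_ge0 (ltW eta0) xN0; have := mulr_ge0 K0 xN0.
split; lra.
Qed.

Lemma polydisc_iter_neq0 (y : C * C) : in_polydisc y -> y.1 != 0 ->
  forall n, (iter n f y).1 != 0.
Proof.
move=> y_in y1; elim=> //= n IH; have [zn wn] := polydisc_iter y_in n.
by have [_ _ _ _ /(_ IH)] := absorbing zn wn.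
Qed.

Lemma p_fix0 : p 0 = 0.
Proof.
have z0 : cabs (0 : C) <= eta by rewrite cabs0 ltW.
have w0 : cabs (0 : C) <= sig by apply: le_trans z0 eta_sig.
have [_ p0 _ _ _] := absorbing z0 w0; rewrite cabs0 mul0r in p0.
by apply: cabs_eq0; apply/eqP; rewrite eq_le p0 cabs_ge0.
Qed.

Lemma Ul_in_polydisc (r l : R) (y : C * C) : r <= eta -> 0 < l -> Ul r l y ->
  in_polydisc y /\ y.1 != 0.
Proof.
move=> r_eta l0 [z_r w_r]; have z_eta := ltW (lt_le_trans z_r r_eta).
have y1 : y.1 != 0.
  by apply: contraTneq w_r => ->; rewrite cabs0 powR0 ?gt_eqF // mulr0 -leNgt cabs_ge0.
have pow_le1 : powR (cabs y.1) l <= 1.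
  have := @ge0_ler_powR R l (ltW l0) (cabs y.1) 1; rewrite powR1 !nnegrE cabs_ge0 ler01.
  by apply => //; exact: le_trans z_eta eta_1.
have r0 : 0 < r by apply: le_lt_trans z_r; exact: cabs_ge0.
split => //; split => //; apply: le_trans (ltW w_r) (le_trans _ (le_trans r_eta eta_sig)).
by rewrite -[leRHS]mulr1; apply: ler_wpM2l => //; exact: ltW.
Qed.

Lemma Afl_sub_basin_notEz (r l : R) x : r <= eta -> 0 < l ->
  Afl DZ p q r l x -> basin2 DZ p q x /\ ~ Ez DZ p q x.
Proof.
move=> r_eta l0 [n [D_le y_Ul]]; have [y_in y1] := Ul_in_polydisc r_eta l0 y_Ul.
have shift k : iter (k + n) f x = iter k f (iter n f x) by rewrite iterD.
split; first split.
- move=> k; have [/D_le //|nk] := leqP k n; rewrite -(subnK (ltnW nk)) shift.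
  by have [zk wk] := polydisc_iter y_in (k - n); have [] := absorbing zk wk.
- move=> eps eps0; have [N conv] := polydisc_iter_cvg y_in eps0.
  exists (N + n)%N => k Nk; have nk := leq_trans (leq_addl N n) Nk.
  by rewrite -(subnK nk) shift; apply: conv; rewrite leq_subRL // addnC.
move=> [n' [_ z0]]; have [n'n|nn'] := leqP n' n.
  move/eqP: y1; apply; rewrite -(subnK n'n) iterD iter_skew_fst z0.
  by elim: (n - n')%N => //= k ->; exact: p_fix0.
by move: z0; rewrite -(subnK (ltnW nn')) shift; apply/eqP/polydisc_iter_neq0.
Qed.

End PolydiscOrbits.

Lemma p_log_bound (dd : R) : dl%:R < dd -> exists2 rho : R, 0 < rho &
  forall z, z != 0 -> cabs z <= rho -> - ln (cabs (p z)) <= dd * - ln (cabs z).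
Proof.
move=> dl_dd; have [eta eta0 p_bounds] := p_modulus_bounds.
have a0 : 0 < cabs a / 2 by rewrite divr_gt0 ?cabs_gt0.
have [rT rT0 bigZ] := neg_ln_ge_near0 (- ln (cabs a / 2) / (dd - dl%:R)).
exists (Num.min eta rT) => [|z z0]; first by rewrite lt_min eta0.
rewrite le_min => /andP[z_eta z_rT]; have [_ p_lo _] := p_bounds z z_eta.
have z_pos := cabs_gt0 z0.
have lo_pos : 0 < cabs a / 2 * cabs z ^+ dl by rewrite mulr_gt0 ?exprn_gt0.
have : ln (cabs a / 2 * cabs z ^+ dl) <= ln (cabs (p z)).
  by rewrite ler_ln ?posrE // (lt_le_trans lo_pos p_lo).
rewrite lnM ?posrE ?exprn_gt0 // lnXn //.
have := bigZ _ z_pos z_rT; rewrite ler_pdivrMr ?subr_gt0 // -mulr_natr; nra.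
Qed.

(* [th] splits the exponent [i Z + j W]: the part [th (i Z + j W) >= mu W] gives the decay,
   the rest absorbs the radius [rho1] of absolute convergence. *)
Lemma q_weighted_decay (lp kap mu : R) : 0 < lp -> 0 < mu -> mu < kap ->
  (forall i j, b i j != 0 -> kap * lp <= np_weight lp i j) ->
  exists M rho : R, [/\ 0 < M, 0 < rho & forall z w, z != 0 -> w != 0 ->
    cabs z <= rho -> cabs w <= rho -> - ln (cabs w) <= lp * - ln (cabs z) ->
    cabs (q z w) <= expR (- (mu * - ln (cabs w))) * M].
Proof.
move=> lp0 mu0 mu_kap weight.
have [rho1 [M [rho10 M0 q_le]]] := q_coefficient_bound.
have kap0 : 0 < kap := lt_trans mu0 mu_kap.
pose th := mu / kap; have th_kap : th * kap = mu by rewrite divfK ?gt_eqF.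
have th0 : 0 <= th by rewrite divr_ge0 ?ltW.
have th1 : 0 < 1 - th by rewrite subr_gt0 ltr_pdivrMr // mul1r.
have [rT rT0 bigL] := neg_ln_ge_near0 (`|ln rho1| / (1 - th)).
have T_rho1 : - ln rho1 <= (1 - th) * (`|ln rho1| / (1 - th)).
  by rewrite mulrC divfK ?gt_eqF // -normrN ler_norm.
exists M, (Num.min rho1 rT); split=> // [|z w z0 w0]; first by rewrite lt_min rho10.
rewrite !le_min => /andP[z_rho1 z_rT] /andP[_ w_rT] WZ.
have [Z_big W_big] := (bigL _ (cabs_gt0 z0) z_rT, bigL _ (cabs_gt0 w0) w_rT).
move: WZ Z_big W_big; set Z := - ln (cabs z); set W := - ln (cabs w) => WZ Z_big W_big.
have W0 : 0 <= W by apply: le_trans _ W_big; apply: divr_ge0; [exact: normr_ge0 | exact: ltW].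
apply: q_le => // [|i j bij]; first exact: expR_ge0.
have ez n : cabs z ^+ n = expR (n%:R * - Z) by rewrite expRM_natl opprK lnK ?posrE ?cabs_gt0.
have ew n : cabs w ^+ n = expR (n%:R * - W) by rewrite expRM_natl opprK lnK ?posrE ?cabs_gt0.
have er n : rho1 ^+ n = expR (n%:R * ln rho1) by rewrite expRM_natl lnK ?posrE.
rewrite ez ew !er -!expRD ler_expR.
have := ler_wpM2l th0 (log_weight_ge lp0 W0 WZ (weight i j bij)); rewrite mulrA th_kap.
have := ler_wpM2l (ler0n R i) (le_trans T_rho1 (ler_wpM2l (ltW th1) Z_big)).
have := ler_wpM2l (ler0n R j) (le_trans T_rho1 (ler_wpM2l (ltW th1) W_big)).
lra.
Qed.

Lemma q_log_bound (lp kap mu : R) : 0 < lp -> 0 < mu -> mu < kap ->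
  (forall i j, b i j != 0 -> kap * lp <= np_weight lp i j) ->
  exists2 rho : R, 0 < rho & forall z w, z != 0 -> w != 0 -> q z w != 0 ->
    cabs z <= rho -> cabs w <= rho -> - ln (cabs w) <= lp * - ln (cabs z) ->
    mu * - ln (cabs w) <= - ln (cabs (q z w)).
Proof.
move=> lp0 mu0 mu_kap weight; pose mu' := (mu + kap) / 2.
have [mu'0 mu'_kap gap] : [/\ 0 < mu', mu' < kap & 0 < mu' - mu] by rewrite /mu'; split; lra.
have [M [rho1 [M0 rho10 q_decay]]] := q_weighted_decay lp0 mu'0 mu'_kap weight.
have [rT rT0 bigL] := neg_ln_ge_near0 (`|ln M| / (mu' - mu)).
exists (Num.min rho1 rT) => [|z w z0 w0 q0]; first by rewrite lt_min rho10.
rewrite !le_min => /andP[z_rho1 _] /andP[w_rho1 w_rT] WZ.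
have := q_decay z w z0 w0 z_rho1 w_rho1 WZ.
rewrite -ler_ln ?posrE ?mulr_gt0 ?expR_gt0 ?cabs_gt0 // lnM ?posrE ?expR_gt0 // expRK.
have := bigL _ (cabs_gt0 w0) w_rT; rewrite ler_pdivrMr // mulrC.
have := ler_norm (ln M); lra.
Qed.

Lemma orbit_not_in_sector (lp e : R) : 0 < lp -> 0 < e ->
  (forall i j, b i j != 0 -> dl%:R * lp + e <= np_weight lp i j) ->
  exists2 rho : R, 0 < rho & forall x N, (forall n, (N <= n)%N ->
    [/\ (iter n f x).1 != 0, (iter n f x).2 != 0,
        cabs (iter n f x).1 <= rho & cabs (iter n f x).2 <= rho]) ->
  ~ (forall n, (N <= n)%N -> - ln (cabs (iter n f x).2) <= lp * - ln (cabs (iter n f x).1)).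
Proof.
move=> lp0 e0 gap; have elp : 0 < e / lp by rewrite divr_gt0.
have dl0 : (0 : R) <= dl%:R := ler0n _ _.
pose kap := dl%:R + e / lp; pose mu := dl%:R + e / lp / 2; pose dd := dl%:R + e / lp / 4.
have weight i j : b i j != 0 -> kap * lp <= np_weight lp i j.
  by move=> bij; rewrite mulrDl divfK ?gt_eqF ?gap.
have [dd0 dl_dd dd_mu mu0 mu_kap] : [/\ 0 < dd, dl%:R < dd, dd < mu, 0 < mu & mu < kap].
  by rewrite /dd /mu /kap; split; lra.
have [rp rp0 p_log] := p_log_bound dl_dd.
have [rq rq0 q_log] := q_log_bound lp0 mu0 mu_kap weight.
have [rho rho0 [rho_p rho_q rho1]] : exists2 rho : R, 0 < rho & [/\ rho <= rp, rho <= rq & rho < 1].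
  exists (Num.min (Num.min rp rq) 2^-1); first by rewrite !lt_min rp0 rq0 /=; lra.
  have half1 : 2^-1 < 1 :> R by lra.
  by split; rewrite ?ge_min ?gt_min ?lexx ?half1 ?orbT.
exists rho => // x N small dominated.
apply: (@faster_growth_not_dominated _ (fun n => - ln (cabs (iter n f x).2))
          (fun n => - ln (cabs (iter n f x).1)) N mu dd lp dd0 dd_mu _ lp0 _ dominated).
  have [_ wN0 _ wN] := small N (leqnn N); rewrite oppr_gt0; apply: ln_lt0.
  by rewrite cabs_gt0 //= (le_lt_trans wN rho1).
move=> n Nn; have [zn0 wn0 zn wn] := small n Nn.
have [_ wn1 _ _] := small n.+1 (leqW Nn).
split; first by apply: q_log; rewrite ?(le_trans _ rho_q) ?dominated.
by apply: p_log; rewrite ?(le_trans zn rho_p).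
Qed.

Lemma basin_notEz_sub_Afl (r l lp e : R) : 0 < r -> 0 < l -> l < lp -> 0 < e ->
  (forall i j, b i j != 0 -> dl%:R * lp + e <= np_weight lp i j) ->
  forall x, basin2 DZ p q x -> ~ Ez DZ p q x -> Afl DZ p q r l x.
Proof.
move=> r0 l0 l_lp e0 gap x [x_DZ x_cvg] notEz; have lp0 : 0 < lp by lra.
have [rS rS0 sector] := orbit_not_in_sector lp0 e0 gap.
have [rU rU0 exitU] := Ul_of_log_gap r0 l0 l_lp.
have [N small] := x_cvg (Num.min rS rU) ltac:(by rewrite lt_min rS0).
have z_neq0 n : (iter n f x).1 != 0.
  by apply/eqP => z0; apply: notEz; exists n; split => // k _; apply: x_DZ.
have Afl_at n : (N <= n)%N -> ((iter n f x).2 = 0 \/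
    lp * - ln (cabs (iter n f x).1) < - ln (cabs (iter n f x).2)) -> Afl DZ p q r l x.
  move=> Nn exit; exists n; split => [k _|]; first exact: x_DZ.
  have [zn _] := small n Nn; rewrite lt_min in zn; case/andP: zn => _ zn.
  by rewrite [iter n f x]surjective_pairing; apply: exitU => //; apply: ltW.
apply: NNPP => notAfl; apply: (sector x N).
  move=> n Nn; have [zn wn] := small n Nn; rewrite !lt_min in zn wn.
  case/andP: zn => zn _; case/andP: wn => wn _; split; rewrite ?ltW //.
  by apply/eqP => w0; apply: notAfl; apply: Afl_at Nn _; left.
by move=> n Nn; rewrite leNgt; apply/negP => gt; apply: notAfl; apply: Afl_at Nn _; right.
Qed.

End Dynamics.

Lemma admissible_domain_ball (R : realType) (DZ : R[i] -> Prop) (p : R[i] -> R[i]) :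
  admissible_domain DZ p -> exists2 rD : R, 0 < rD & forall z, cabs z <= rD -> DZ z.
Proof.
case=> [all_DZ|[Rd [Rd0 [DZ_disc _]]]]; first by exists 1.
by exists (Rd / 2) => [|z z_le]; [rewrite divr_gt0 | apply/DZ_disc; lra].
Qed.

Theorem theorem2p3 (R : realType) (DZ : R[i] -> Prop)
    (p : R[i] -> R[i]) (q : R[i] -> R[i] -> R[i])
    (ca : nat -> R[i]) (a : R[i]) (delta : nat)
    (b : nat -> nat -> R[i])
    (s : nat) (nv mv : nat -> nat) :
  (* domain of f: C^2, or {|z| < Rd} x C with A_p relatively compact in {|z|<Rd} *)
  admissible_domain DZ p ->
  (* p(z) = a z^delta + O(z^(delta+1)), holomorphic on the domain *)
  (forall z, DZ z -> pseries1 ca p z) ->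
  (forall k, (k < delta)%N -> ca k = 0) -> ca delta = a -> a != 0 -> (2 <= delta)%N ->
  (* q(z,w) = sum b_ij z^i w^j, holomorphic on the domain, b_00 = b_01 = 0 *)
  (forall z w, DZ z -> pseries2 b q z w) ->
  b 0%N 0%N = 0 -> b 0%N 1%N = 0 ->
  (* Newton polygon with vertices (n_1,m_1),...,(n_s,m_s), s > 1 *)
  NP_vertices b s nv mv -> (1 < s)%N ->
  (* Case 2 *)
  (delta%:R <= T_last R s nv mv) ->
  exists r0 : R, 0 < r0 /\ forall r : R, 0 < r -> r < r0 ->
    ((delta <= mv s)%N ->
       forall l : R, 0 < l ->
         forall x, Afl DZ p q r l x <-> (basin2 DZ p q x /\ ~ Ez DZ p q x)) /\
    ((mv s < delta)%N -> (nv 1%N, mv 1%N) <> (0%N, delta) ->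
       forall l : R, 0 < l -> l < (nv s)%:R / (delta%:R - (mv s)%:R) ->
         forall x, Afl DZ p q r l x <-> (basin2 DZ p q x /\ ~ Ez DZ p q x)).
Proof.
move=> adm p_ser ca_lt ca_dl a0 dl2 q_ser b00 b01 vertices s1 case2.
have DZ_ball := admissible_domain_ball adm.
have [eta [sig [B [eta0 eta_sig eta1 B0 absorbing]]]] :=
  absorbing_polydisc DZ_ball p_ser ca_lt ca_dl q_ser a0 dl2 b00 b01.
have characterization (r l lp : R) : 0 < r -> r <= eta -> 0 < l -> l < lp ->
    (forall k, (1 <= k)%N -> (k <= s)%N -> delta%:R * lp < np_weight lp (nv k) (mv k)) ->
    forall x, Afl DZ p q r l x <-> (basin2 DZ p q x /\ ~ Ez DZ p q x).
  move=> r0 r_eta l0 l_lp above x; have lp0 : 0 < lp by lra.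
  have [e e0 gap] := weighted_order_gap vertices lp0 above.
  split => [Afl_x|[basin_x notEz_x]].
    exact: (Afl_sub_basin_notEz eta0 eta_sig eta1 B0 absorbing r_eta l0 Afl_x).
  exact: (basin_notEz_sub_Afl DZ_ball p_ser ca_lt ca_dl q_ser a0 r0 l0 l_lp e0 gap basin_x notEz_x).
exists eta; split => // r r0 r_eta; split.
  move=> dl_le l l0; have lp0 : 0 < l + 1 by lra.
  apply: (characterization r l (l + 1)) => //; [exact: ltW | lra |].
  by move=> k k1 ks; apply: (vertex_weight_gt_of_le_last vertices s1 dl_le lp0 k1 ks).
move=> dl_gt not_first l l0 l_alpha.
pose lp := (l + (nv s)%:R / (delta%:R - (mv s)%:R)) / 2.
have [lp0 l_lp lp_alpha] : [/\ 0 < lp, l < lp & lp < (nv s)%:R / (delta%:R - (mv s)%:R)].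
  by rewrite /lp; split; lra.
apply: (characterization r l lp) => //; first exact: ltW.
move=> k k1 ks.
exact: (vertex_weight_gt_of_case2 vertices s1 case2 dl_gt not_first lp0 lp_alpha k1 ks).
Qed.
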